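(* Let $\gamma=(\alpha,\beta)\in\mathbb N_0^{2n}$ with $\alpha\ge\beta$, let $\sigma\in\{+,-\}$ with $\alpha>\beta$ if $\sigma=-$, and let $\tilde\gamma=(\tilde\alpha,\tilde\alpha)\in\mathbb N_0^{2n}$. Let $z_\sigma^{(\ell)}$ be the Commutator Chain of Type I generated by $g_\sigma^\gamma$ and $g_+^{\tilde\gamma}$. Assume there is an index $k$ with $\alpha_k\neq\beta_k$ and $\tilde\alpha_k\neq0$. Then for every $\ell\ge0$, $z_\sigma^{(\ell)}\neq0$ and $$\deg(z_\sigma^{(\ell)})=2\ell(|\tilde\alpha|-1)+|\alpha|+|\beta| .$$
   Context: Fix $n\ge 1$. The Weyl algebra $A_n$ is the unital associative $\mathbb{C}$-algebra generated by $a_1,\dots,a_n,a_1^\dagger,\dots,a_n^\dagger$ subject to $[a_i,a_j^\dagger]=\delta_{ij}$ and $[a_i,a_j]=[a_i^\dagger,a_j^\dagger]=0$. For $\gamma=(\alpha,\beta)\in\mathbb N_0^{2n}$ set $a^{\gamma}=(a_1^\dagger)^{\alpha_1}\cdots(a_n^\dagger)^{\alpha_n}a_1^{\beta_1}\cdots a_n^{\beta_n}$; these form a $\mathbb C$-basis; $|\alpha|=\sum_j\alpha_j$, $|\gamma|=|\alpha|+|\beta|$. For $0\neq g\in A_n$, $\deg(g)$ is the largest $|\gamma|$ with $a^\gamma$ having nonzero coefficient in $g$; $\deg(0)=-\infty$. $\dagger$ is the conjugate-linear anti-automorphism with $(a_j)^\dagger=a_j^\dagger$, $(a_j^\dagger)^\dagger=a_j$.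 $\hat A_n=\{g\in A_n:g^\dagger=-g\}$; $g_+^\gamma=i((a^\gamma)^\dagger+a^\gamma)$, $g_-^\gamma=(a^\gamma)^\dagger-a^\gamma$. The order on $\mathbb N_0^n$ is lexicographic. Commutator Chain of Type I generated by $g_\sigma^\gamma$ and $g_+^{\tilde\gamma}$ (with $\tilde\gamma=(\tilde\alpha,\tilde\alpha)$): $z_\sigma^{(0)}=g_\sigma^\gamma$ and $z_\sigma^{(\ell+1)}=[g_+^{\tilde\gamma},z_\sigma^{(\ell)}]$ for $\ell\ge0$. *)

From HB Require Import structures.
From mathcomp Require Import all_boot all_order all_algebra all_field.
From mathcomp Require Import mpoly.
Set Implicit Arguments. Unset Strict Implicit. Unset Printing Implicit Defensive.
Import Order.TTheory GRing.Theory Num.Theory.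
Local Open Scope ring_scope.

(* An element is stored through its
   coordinates in the normal-ordered basis a^gamma, gamma = (alpha,beta):
   we use the vector space {mpoly algC[n + n]}, the monomial 'X_[m] standing
   for a^gamma with alpha_j = m (lshift n j) (exponent of a_j^dagger) and
   beta_j = m (rshift n j) (exponent of a_j).  Only the linear structure of
   mpoly is used; the Weyl product is [wmul] below. *)
Definition weyl (n : nat) := {mpoly algC[n + n]}.

Section Weyl.
Variable n : nat.

Definition alpha_of (m : 'X_{1..n + n}) : 'X_{1..n} :=
  [multinom m (lshift n j) | j < n].
Definition beta_of (m : 'X_{1..n + n}) : 'X_{1..n} :=
  [multinom m (rshift n j) | j < n].

Definition mkgamma (a b : 'X_{1..n}) : 'X_{1..n + n} :=
  [multinom match split i with inl j => a j | inr j => b j end | i < n + n].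

Definition amono (a b : 'X_{1..n}) : weyl n := 'X_[mkgamma a b].

(* Left multiplication by the generators on normal-ordered expressions:
     a_j^dag * a^(alpha,beta) = a^(alpha + e_j, beta)
     a_j     * a^(alpha,beta) = a^(alpha, beta + e_j) + alpha_j a^(alpha - e_j, beta)
   (the latter is exactly the relation a_j a_j^dag = a_j^dag a_j + 1). *)
Definition lmul_cre (j : 'I_n) (p : weyl n) : weyl n := 'X_[U_(lshift n j)] * p.
Definition lmul_ann (j : 'I_n) (p : weyl n) : weyl n :=
  'X_[U_(rshift n j)] * p + mderiv (lshift n j) p.

Definition lmul_mono (m : 'X_{1..n + n}) (p : weyl n) : weyl n :=
  foldr (fun j q => iter (m (lshift n j)) (lmul_cre j) q)
    (foldr (fun j q => iter (m (rshift n j)) (lmul_ann j) q) p (enum 'I_n))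
    (enum 'I_n).

Definition wmul (p q : weyl n) : weyl n :=
  \sum_(m <- msupp p) p@_m *: lmul_mono m q.

Definition wcomm (p q : weyl n) : weyl n := wmul p q - wmul q p.

(* dagger: conjugate-linear anti-automorphism with a_j <-> a_j^dag;
   on the basis ((a^dag)^alpha a^beta)^dag = (a^dag)^beta a^alpha. *)
Definition swapm (m : 'X_{1..n + n}) : 'X_{1..n + n} :=
  mkgamma (beta_of m) (alpha_of m).
Definition dagger (p : weyl n) : weyl n :=
  \sum_(m <- msupp p) (p@_m)^* *: 'X_[swapm m].

(* deg(g) = largest |gamma| in the support (meaningful for g <> 0) *)
Definition wdeg (p : weyl n) : nat := (msize p).-1.

Inductive sign := SPlus | SMinus.

Definition gsig (s : sign) (a b : 'X_{1..n}) : weyl n :=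
  match s with
  | SPlus => 'i *: (dagger (amono a b) + amono a b)
  | SMinus => dagger (amono a b) - amono a b
  end.

Fixpoint zchain (s : sign) (a b at_ : 'X_{1..n}) (l : nat) : weyl n :=
  match l with
  | 0 => gsig s a b
  | l'.+1 => wcomm (gsig SPlus at_ at_) (zchain s a b at_ l')
  end.

Definition lex_lt (a b : 'X_{1..n}) : Prop :=
  exists i : 'I_n, (forall j : 'I_n, (j < i)%N -> a j = b j) /\ (a i < b i)%N.
Definition lex_le (a b : 'X_{1..n}) : Prop := a = b \/ lex_lt a b.

End Weyl.

From HB Require Import structures.
From mathcomp Require Import all_boot all_order all_algebra all_field.
From mathcomp Require Import mpoly ring zify.
Set Implicit Arguments. Unset Strict Implicit. Unset Printing Implicit Defensive.
Import Order.TTheory GRing.Theory Num.Theory.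
Local Open Scope ring_scope.
Arguments mderiv : simpl never.

(* Identify an element of A_n with its normal-ordered symbol, a commutative
   polynomial in the a_j^dag and a_j.  Normal ordering a product removes two
   degrees per contraction a_j a_j^dag -> 1, so the Weyl product is
   p q + sum_j d_(a_j) p d_(a_j^dag) q up to terms four degrees lower, and
   the commutator [f, z] is the Poisson bracket {f, z} up to such terms.
   Bracketing with a^(t,t) acts on a^(a,b) as multiplication by
   H_(a,b) = sum_j t_j (a_j - b_j) a^((t,t) - e_j - e_j^dag), a polynomial
   with {a^(t,t), H_(a,b)} = 0 and H_(b,a) = - H_(a,b).  Hence the top-degree
   part of z^(l) is (2i)^l H_(a,b)^l (c2 a^(a,b) + (-1)^l c1 a^(b,a)): it is
   homogeneous of degree 2l(|t|-1) + |a| + |b|, and nonzero because the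
   symbols form an integral domain and H_(a,b) <> 0 when t_k <> 0 and
   a_k <> b_k. *)

Section DegreeBound.
Variables (k : nat) (R : nzRingType).
Implicit Types p q : {mpoly R[k]}.

(* Every monomial of [p] has degree at most [d - e], stated additively to
   avoid truncated subtraction. *)
Definition deg_add_le p e d := forall m, m \in msupp p -> (mdeg m + e <= d)%N.

Lemma deg_add_le0 e d : deg_add_le 0 e d.
Proof. by move=> m; rewrite mcoeff_msupp mcoeff0 eqxx. Qed.

Lemma deg_add_leD p q e d :
  deg_add_le p e d -> deg_add_le q e d -> deg_add_le (p + q) e d.
Proof. by move=> hp hq m /msuppD_le; rewrite mem_cat => /orP[/hp|/hq]. Qed.

Lemma deg_add_leB p q e d :
  deg_add_le p e d -> deg_add_le q e d -> deg_add_le (p - q) e d.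
Proof.
by move=> hp hq; apply: deg_add_leD => // m; rewrite (perm_mem (msuppN q)) => /hq.
Qed.

Lemma deg_add_leZ c p e d : deg_add_le p e d -> deg_add_le (c *: p) e d.
Proof. by move=> hp m /msuppZ_le /hp. Qed.

Lemma deg_add_le_sum (I : Type) (r : seq I) (P : pred I) (F : I -> {mpoly R[k]}) e d :
  (forall i, P i -> deg_add_le (F i) e d) -> deg_add_le (\sum_(i <- r | P i) F i) e d.
Proof.
move=> hF; elim/big_rec: _ => [|i x Pi hx]; first exact: deg_add_le0.
by apply: deg_add_leD => //; apply: hF.
Qed.

Lemma deg_add_le_weaken p e d e' d' :
  deg_add_le p e d -> (d + e' <= d' + e)%N -> deg_add_le p e' d'.
Proof. by move=> hp h m /hp; lia. Qed.

Lemma deg_add_leM p q e1 d1 e2 d2 : deg_add_le p e1 d1 -> deg_add_le q e2 d2 ->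
  deg_add_le (p * q) (e1 + e2) (d1 + d2).
Proof.
move=> hp hq m /msuppM_le /allpairsP [[m1 m2] /= [h1 h2 ->]].
by rewrite mdegD; have := hp _ h1; have := hq _ h2; lia.
Qed.

Lemma deg_add_le_mderiv i p e d :
  deg_add_le p e d -> deg_add_le (mderiv i p) e.+1 d.
Proof.
move=> hp m; rewrite mcoeff_msupp mcoeff_mderiv => h.
have : (m + U_(i))%MM \in msupp p.
  by rewrite mcoeff_msupp; apply: contraNneq h => ->; rewrite mul0rn.
by move/hp; rewrite mdegD mdeg1; lia.
Qed.

Lemma deg_add_leX m : deg_add_le 'X_[m] 0 (mdeg m).
Proof. by move=> m'; rewrite msuppX inE => /eqP ->; rewrite addn0. Qed.

Lemma dhomog_deg_add_le p d : p \is d.-homog -> deg_add_le p 0 d.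
Proof. by move=> /dhomogP h m /h ->; rewrite addn0. Qed.

Lemma msize_dhomogD p q d : p != 0 -> p \is d.-homog -> deg_add_le q 1 d ->
  msize (p + q) = d.+1.
Proof.
move=> p0 /dhomogP hp hq.
move: (mlead p) (mlead_supp p0) => m mp.
have qm : q@_m = 0.
  by apply/eqP; rewrite mcoeff_eq0; apply/negP => /hq; rewrite (hp _ mp); lia.
have mpq : m \in msupp (p + q) by rewrite mcoeff_msupp mcoeffD qm addr0 -mcoeff_msupp.
apply/eqP; rewrite eqn_leq; apply/andP; split; last first.
  by have := msize_mdeg_lt mpq; rewrite (hp _ mp).
rewrite msizeE; apply/bigmax_leqP_seq => m' /msuppD_le + _.
by rewrite mem_cat => /orP [/hp -> //|/hq]; lia.
Qed.

End DegreeBound.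

Lemma mderivXvar (k : nat) (R : nzRingType) (i i' : 'I_k) :
  mderiv i' ('X_i : {mpoly R[k]}) = (i == i')%:R.
Proof.
rewrite mderivX mnm1E; case: eqP => [->|_]; last by rewrite scale0r.
have -> : (U_(i') - U_(i'))%MM = 0%MM by apply/mnmP => j; rewrite mnmBE subnn mnm0E.
by rewrite mpolyX0 scale1r.
Qed.

Lemma mderiv_sum (k : nat) (R : nzRingType) i (I : Type) (r : seq I) (P : pred I)
    (F : I -> {mpoly R[k]}) :
  mderiv i (\sum_(j <- r | P j) F j) = \sum_(j <- r | P j) mderiv i (F j).
Proof. exact: raddf_sum. Qed.

Lemma iter_addmE (k : nat) (u w : 'X_{1..k}) m :
  iter m (fun w => u + w)%MM w = (u *+ m + w)%MM.
Proof.
elim: m => [|m ih] /=; apply/mnmP => i; first by rewrite mnmDE mulmnE muln0.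
by rewrite ih !mnmDE !mulmnE mulnS addnA.
Qed.

Lemma foldr_iter_addmE (I : Type) (k : nat) (f : I -> 'I_k) (c : I -> nat) s w i :
  (foldr (fun j w => iter (c j) (fun w => U_(f j) + w)%MM w) w s) i =
  (\sum_(j <- s) ((f j == i) * c j) + w i)%N.
Proof.
elim: s => [|j s ih] /=; first by rewrite big_nil.
by rewrite iter_addmE mnmDE ih mulmnE mnm1E big_cons addnA.
Qed.

Lemma foldr_iter_ind (I A B : Type) (P : A -> B -> Prop) (f : I -> A -> A)
    (g : I -> B -> B) (c : I -> nat) s x y :
  (forall j x y, P x y -> P (f j x) (g j y)) -> P x y ->
  P (foldr (fun j x => iter (c j) (f j) x) x s)
    (foldr (fun j y => iter (c j) (g j) y) y s).
Proof.
move=> step; elim: s => [|j s ih] //= /ih hs.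
by elim: (c j) => [|m ihm] //=; apply: step.
Qed.

Section NormalOrdering.
Variable n : nat.
Local Notation W := (weyl n).
Local Notation cre j := (lshift n j).
Local Notation ann j := (rshift n j).
Implicit Types (p q f z : W) (a b : 'X_{1..n}) (w : 'X_{1..n + n}).

Lemma cre_ann_ind (P : 'I_(n + n) -> Prop) :
  (forall j, P (cre j)) -> (forall j, P (ann j)) -> forall i, P i.
Proof.
move=> hl hr i; case: (splitP i) => j hj.
  by have -> : i = cre j by apply: val_inj.
by have -> : i = ann j by apply: val_inj.
Qed.

Lemma mkgamma_cre a b j : mkgamma a b (cre j) = a j.
Proof. by rewrite mnmE -[cre j]/(unsplit (inl j)) unsplitK. Qed.

Lemma mkgamma_ann a b j : mkgamma a b (ann j) = b j.
Proof. by rewrite mnmE -[ann j]/(unsplit (inr j)) unsplitK. Qed.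

Lemma mdeg_mkgamma a b : mdeg (mkgamma a b) = (mdeg a + mdeg b)%N.
Proof.
rewrite !mdegE big_split_ord /=.
by congr (_ + _)%N; apply: eq_bigr => j _; rewrite ?mkgamma_cre ?mkgamma_ann.
Qed.

Lemma dagger_amono a b : dagger (amono a b) = amono b a.
Proof.
rewrite /dagger /amono msuppX big_seq1 mcoeffX eqxx conjC1 scale1r /swapm.
suff [-> ->] : beta_of (mkgamma a b) = b /\ alpha_of (mkgamma a b) = a by [].
by split; apply/mnmP => j; rewrite mnmE ?mkgamma_cre ?mkgamma_ann.
Qed.

(* On [weyl n], [*] is the commutative product of normal-ordered symbols;
   [wmul1 p q] is [wmul p q] truncated after the terms with one contraction
   [a_j a_j^dag -> 1]. *)
Definition wmul1 p q : W :=
  p * q + \sum_(j < n) mderiv (ann j) p * mderiv (cre j) q.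

Lemma wmul1_1 q : wmul1 1 q = q.
Proof.
rewrite /wmul1 mul1r big1 ?addr0 // => j _.
by rewrite -mpolyC1 mderivC mul0r.
Qed.

Lemma wmul1Dl p1 p2 q : wmul1 (p1 + p2) q = wmul1 p1 q + wmul1 p2 q.
Proof.
rewrite /wmul1 mulrDl.
under eq_bigr => j _ do rewrite mderivD mulrDl.
by rewrite big_split /=; ring.
Qed.

Lemma wmul1Zl c p q : wmul1 (c *: p) q = c *: wmul1 p q.
Proof.
rewrite /wmul1 scalerDr -scalerAl scaler_sumr; congr (_ + _).
by apply: eq_bigr => j _; rewrite mderivZ scalerAl.
Qed.

Lemma wmul10l q : wmul1 0 q = 0.
Proof. by rewrite /wmul1 mul0r big1 ?addr0 // => j _; rewrite mderiv0 mul0r. Qed.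

Lemma contraction_mulXcre i p (r : 'I_n -> W) :
  \sum_(j < n) mderiv (ann j) ('X_(cre i) * p) * r j =
  'X_(cre i) * \sum_(j < n) mderiv (ann j) p * r j.
Proof.
rewrite mulr_sumr; apply: eq_bigr => j _.
by rewrite mderivM mderivXvar eq_shift mul0r add0r mulrA.
Qed.

Lemma contraction_mulXann i p (r : 'I_n -> W) :
  \sum_(j < n) mderiv (ann j) ('X_(ann i) * p) * r j =
  p * r i + 'X_(ann i) * \sum_(j < n) mderiv (ann j) p * r j.
Proof.
rewrite mulr_sumr (eq_bigr (fun j => (i == j)%:R * (p * r j) +
    'X_(ann i) * (mderiv (ann j) p * r j))); last first.
  by move=> j _; rewrite mderivM mderivXvar eq_shift mulrDl !mulrA.
rewrite big_split /= (bigD1 i) //= eqxx mul1r big1 ?addr0 // => j /negbTE.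
by rewrite eq_sym => ->; rewrite mul0r.
Qed.

Definition ann_only w := forall j, w (cre j) = 0%N.

Definition lmul_approx q dq (T : W) w :=
  deg_add_le (T - wmul1 'X_[w] q) 4 (mdeg w + dq).

(* [w] has no creation exponent, so [a_i] passes through ['X_[w]] and
   contracts only with [q]. *)
Lemma lmul_ann_approx q dq T w i : deg_add_le q 0 dq -> ann_only w ->
  lmul_approx q dq T w -> lmul_approx q dq (lmul_ann i T) (U_(ann i) + w)%MM.
Proof.
move=> hq hw; rewrite /lmul_approx; set L := T - _ => hL.
have -> : T = wmul1 'X_[w] q + L by rewrite /L addrC subrK.
have dw : mderiv (cre i) ('X_[w] : W) = 0 by rewrite mderivX hw scale0r.
have dcontr : mderiv (cre i) (\sum_(j < n) mderiv (ann j) ('X_[w] : W) * mderiv (cre j) q)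
   = \sum_(j < n) mderiv (ann j) 'X_[w] * mderiv (cre j) (mderiv (cre i) q).
  rewrite mderiv_sum; apply: eq_bigr => j _.
  by rewrite mderivM mderiv_comm dw mderiv0 mul0r add0r mderiv_comm.
have -> : lmul_ann i (wmul1 'X_[w] q + L) - wmul1 'X_[(U_(ann i) + w)%MM] q =
    'X_(ann i) * L + mderiv (cre i) L +
    \sum_(j < n) mderiv (ann j) 'X_[w] * mderiv (cre j) (mderiv (cre i) q).
  by rewrite /lmul_ann /wmul1 mpolyXD contraction_mulXann !mderivD mderivM dw dcontr; ring.
rewrite mdegD mdeg1.
apply: deg_add_leD; first apply: deg_add_leD.
- apply: (deg_add_le_weaken (deg_add_leM (deg_add_leX (m:=U_(ann i)%MM)) hL)).
  by rewrite mdeg1; lia.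
- by apply: (deg_add_le_weaken (deg_add_le_mderiv hL)); lia.
- apply: deg_add_le_sum => j _.
  apply: (deg_add_le_weaken (deg_add_leM (deg_add_le_mderiv (deg_add_leX (m:=w)))
    (deg_add_le_mderiv (deg_add_le_mderiv hq)))).
  lia.
Qed.

Lemma lmul_cre_approx q dq T w i :
  lmul_approx q dq T w -> lmul_approx q dq (lmul_cre i T) (U_(cre i) + w)%MM.
Proof.
rewrite /lmul_approx; set L := T - _ => hL.
have -> : T = wmul1 'X_[w] q + L by rewrite /L addrC subrK.
have -> : lmul_cre i (wmul1 'X_[w] q + L) - wmul1 'X_[(U_(cre i) + w)%MM] q =
    'X_(cre i) * L.
  by rewrite /lmul_cre /wmul1 mpolyXD contraction_mulXcre; ring.
rewrite mdegD mdeg1.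
apply: (deg_add_le_weaken (deg_add_leM (deg_add_leX (m:=U_(cre i)%MM)) hL)).
by rewrite mdeg1; lia.
Qed.

Lemma lmul_mono_approx q dq m : deg_add_le q 0 dq ->
  deg_add_le (lmul_mono m q - wmul1 'X_[m] q) 4 (mdeg m + dq).
Proof.
move=> hq; pose addU i w := (U_(i) + w)%MM.
have q_approx : lmul_approx q dq q 0%MM.
  by rewrite /lmul_approx mpolyX0 wmul1_1 subrr; exact: deg_add_le0.
have ann_step j T w : lmul_approx q dq T w /\ ann_only w ->
    lmul_approx q dq (lmul_ann j T) (addU (ann j) w) /\ ann_only (addU (ann j) w).
  move=> [hT hw]; split; first exact: lmul_ann_approx.
  by move=> k; rewrite mnmDE mnm1E eq_shift hw.
have [approx_ann _] := foldr_iter_ind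
  (P := fun T w => lmul_approx q dq T w /\ ann_only w) (f := @lmul_ann n)
  (g := fun j => addU (ann j)) (fun j => m (ann j)) (enum 'I_n)
  ann_step (conj q_approx (fun j => mnm0E _)).
have := foldr_iter_ind (P := lmul_approx q dq) (f := @lmul_cre n)
  (g := fun j => addU (cre j)) (fun j => m (cre j)) (enum 'I_n)
  (fun j T w => @lmul_cre_approx q dq T w j) approx_ann.
suff -> : foldr (fun j w => iter (m (cre j)) (addU (cre j)) w)
    (foldr (fun j w => iter (m (ann j)) (addU (ann j)) w) 0%MM (enum 'I_n))
    (enum 'I_n) = m by [].
apply/mnmP; apply: cre_ann_ind => i; rewrite !foldr_iter_addmE mnm0E addn0 !big_enum /=.
- rewrite (bigD1 i) //= eqxx mul1n big1 => [|j ji]; last by rewrite eq_shift (negbTE ji).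
  by rewrite big1 ?addn0 // => j _; rewrite eq_shift.
- rewrite big1 => [|j _]; last by rewrite eq_shift.
  by rewrite (bigD1 i) //= eqxx mul1n big1 ?addn0 // => j ji; rewrite eq_shift (negbTE ji).
Qed.

Lemma wmul_approx p q dp dq : deg_add_le p 0 dp -> deg_add_le q 0 dq ->
  deg_add_le (wmul p q - wmul1 p q) 4 (dp + dq).
Proof.
move=> hp hq.
have -> : wmul1 p q = \sum_(m <- msupp p) p@_m *: wmul1 'X_[m] q.
  rewrite {1}[p]mpolyE (big_morph (wmul1^~ q) (fun p1 p2 => wmul1Dl p1 p2 q) (wmul10l q)).
  by apply: eq_bigr => m _; rewrite wmul1Zl.
rewrite /wmul -sumrB; apply: deg_add_le_sum => m _.
case: (boolP (m \in msupp p)) => hm; last first.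
  by rewrite mcoeff_msupp negbK in hm; rewrite (eqP hm) !scale0r subrr; apply: deg_add_le0.
rewrite -scalerBr; apply/deg_add_leZ/(deg_add_le_weaken (lmul_mono_approx (m:=m) hq)).
by have := hp m hm; lia.
Qed.

Definition pbracket f z : W :=
  \sum_(j < n) (mderiv (ann j) f * mderiv (cre j) z - mderiv (ann j) z * mderiv (cre j) f).

Lemma wcomm_approx f z df dz : deg_add_le f 0 df -> deg_add_le z 0 dz ->
  deg_add_le (wcomm f z - pbracket f z) 4 (df + dz).
Proof.
move=> hf hz.
have -> : wcomm f z - pbracket f z = (wmul f z - wmul1 f z) - (wmul z f - wmul1 z f).
  by rewrite /wcomm /pbracket /wmul1 sumrB; ring.
by apply: deg_add_leB; [|rewrite addnC]; apply: wmul_approx.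
Qed.

Lemma deg_add_le_pbracket f z df e dz : deg_add_le f 0 df -> deg_add_le z e dz ->
  deg_add_le (pbracket f z) (e + 2) (df + dz).
Proof.
move=> hf hz; apply: deg_add_le_sum => j _; apply: deg_add_leB.
  apply: (deg_add_le_weaken (deg_add_leM (deg_add_le_mderiv hf) (deg_add_le_mderiv hz))).
  lia.
apply: (deg_add_le_weaken (deg_add_leM (deg_add_le_mderiv hz) (deg_add_le_mderiv hf))).
lia.
Qed.

Lemma pbracketDl f1 f2 z : pbracket (f1 + f2) z = pbracket f1 z + pbracket f2 z.
Proof. by rewrite /pbracket -big_split; apply: eq_bigr => j _ /=; rewrite !mderivD; ring. Qed.

Lemma pbracketZl c f z : pbracket (c *: f) z = c *: pbracket f z.
Proof.
by rewrite /pbracket scaler_sumr; apply: eq_bigr => j _; rewrite !mderivZ -!mul_mpolyC; ring.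
Qed.

Lemma pbracketD f u v : pbracket f (u + v) = pbracket f u + pbracket f v.
Proof. by rewrite /pbracket -big_split; apply: eq_bigr => j _ /=; rewrite !mderivD; ring. Qed.

Lemma pbracketZ f c u : pbracket f (c *: u) = c *: pbracket f u.
Proof.
by rewrite /pbracket scaler_sumr; apply: eq_bigr => j _; rewrite !mderivZ -!mul_mpolyC; ring.
Qed.

Lemma pbracket_sum f (I : Type) (r : seq I) (P : pred I) (F : I -> W) :
  pbracket f (\sum_(i <- r | P i) F i) = \sum_(i <- r | P i) pbracket f (F i).
Proof.
apply: (big_morph (pbracket f) (pbracketD f)).
by rewrite /pbracket big1 // => j _; rewrite !mderiv0 mulr0 mul0r subr0.
Qed.

Lemma pbracketM f u v : pbracket f (u * v) = pbracket f u * v + u * pbracket f v.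
Proof.
rewrite /pbracket mulr_suml mulr_sumr -big_split; apply: eq_bigr => j _ /=.
by rewrite !mderivM; ring.
Qed.

End NormalOrdering.

Section BalancedBracket.
Variables (n : nat) (t : 'X_{1..n}).
Local Notation W := (weyl n).
Local Notation cre j := (lshift n j).
Local Notation ann j := (rshift n j).
Local Notation F := (mkgamma t t).
Implicit Types (a b : 'X_{1..n}) (s : 'X_{1..n + n}).

Definition dropF j : 'X_{1..n + n} := (F - U_(ann j) - U_(cre j))%MM.

Lemma dropF_balanced j k : dropF j (cre k) = dropF j (ann k).
Proof.
rewrite !mnmBE !mnm1E !eq_shift mkgamma_cre mkgamma_ann.
by case: (j == k) => /=; rewrite ?subn0.
Qed.

Lemma mdeg_dropF j : t j <> 0%N -> (mdeg (dropF j) + 2 = mdeg F)%N.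
Proof.
move=> tj; have -> : F = (dropF j + U_(ann j) + U_(cre j))%MM.
  apply/mnmP; apply: cre_ann_ind => k;
  rewrite !mnmDE !mnmBE !mnm1E !eq_shift ?mkgamma_cre ?mkgamma_ann;
  case: (eqVneq j k) => [<-|jk] /=; lia.
by rewrite (mdegD (dropF j + U_(ann j))%MM) (mdegD (dropF j)) !mdeg1; lia.
Qed.

Lemma mnm_dropF j s i i' : t j <> 0%N -> s i' <> 0%N ->
  (i = ann j /\ i' = cre j) \/ (i = cre j /\ i' = ann j) ->
  ((F - U_(i)) + (s - U_(i')))%MM = (dropF j + s)%MM.
Proof.
move=> tj si' hi; apply/mnmP; apply: cre_ann_ind => k;
  case: hi => [] [-> ei']; move: si'; rewrite ei' => si';
  rewrite !mnmDE !mnmBE !mnm1E !eq_shift ?mkgamma_cre ?mkgamma_ann;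
  case: (eqVneq j k) => [<-|jk] /=; lia.
Qed.

Lemma scaled_mulX_dropF j s i i' :
  (i = ann j /\ i' = cre j) \/ (i = cre j /\ i' = ann j) ->
  ((t j * s i')%:R *: ('X_[F - U_(i)] * 'X_[s - U_(i')]) : W) =
  (t j * s i')%:R *: 'X_[dropF j + s].
Proof.
move=> hi; have [->|/eqP tj] := eqVneq (t j) 0%N; first by rewrite mul0n !scale0r.
have [->|/eqP si'] := eqVneq (s i') 0%N; first by rewrite muln0 !scale0r.
by rewrite -mpolyXD (mnm_dropF tj si' hi).
Qed.

Lemma pbracketX s : pbracket 'X_[F] 'X_[s] =
  \sum_(j < n) ((t j)%:R * ((s (cre j))%:R - (s (ann j))%:R)) *: ('X_[dropF j + s] : W).
Proof.
rewrite /pbracket; apply: eq_bigr => j _; rewrite !mderivX mkgamma_cre mkgamma_ann.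
rewrite -!scalerAl -!scalerAr !scalerA -!natrM [(s (ann j) * t j)%N]mulnC.
rewrite (mulrC 'X_[s - _]) !scaled_mulX_dropF; [|by right|by left].
by rewrite -scalerBl !natrM mulrBr.
Qed.

Lemma pbracketX_balanced s : (forall k, s (cre k) = s (ann k)) ->
  pbracket 'X_[F] 'X_[s] = 0.
Proof. by move=> hs; rewrite pbracketX big1 // => j _; rewrite hs subrr mulr0 scale0r. Qed.

Definition bracket_factor a b : W :=
  \sum_(j < n) ((t j)%:R * ((a j)%:R - (b j)%:R)) *: 'X_[dropF j].

Lemma pbracketX_mkgamma a b :
  pbracket 'X_[F] 'X_[mkgamma a b] = bracket_factor a b * 'X_[mkgamma a b].
Proof.
rewrite pbracketX /bracket_factor mulr_suml; apply: eq_bigr => j _.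
by rewrite mkgamma_cre mkgamma_ann mpolyXD scalerAl.
Qed.

Lemma bracket_factorC a b : bracket_factor b a = - bracket_factor a b.
Proof.
rewrite /bracket_factor -sumrN; apply: eq_bigr => j _.
by rewrite -scaleNr; congr (_ *: _); ring.
Qed.

Lemma pbracket_bracket_factorX a b k : pbracket 'X_[F] (bracket_factor a b ^+ k) = 0.
Proof.
have hf : pbracket 'X_[F] (bracket_factor a b) = 0.
  rewrite pbracket_sum big1 // => j _.
  by rewrite pbracketZ pbracketX_balanced ?scaler0 //; apply: dropF_balanced.
elim: k => [|k ih]; first by rewrite expr0 -mpolyX0 pbracketX_balanced // => j; rewrite !mnm0E.
by rewrite exprS pbracketM ih hf mul0r mulr0 addr0.
Qed.

Lemma dhomog_bracket_factor a b : bracket_factor a b \is (mdeg F - 2).-homog.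
Proof.
apply: rpred_sum => j _.
have [tj|/eqP tj] := eqVneq (t j) 0%N; first by rewrite tj mul0r scale0r rpred0.
by apply/rpredZ; rewrite dhomogX -(mdeg_dropF tj) addnK.
Qed.

Lemma bracket_factor_neq0 a b k : t k <> 0%N -> a k <> b k -> bracket_factor a b != 0.
Proof.
move=> /eqP tk /eqP abk.
suff : (bracket_factor a b)@_(dropF k) != 0 by apply: contraNneq => ->; rewrite mcoeff0.
rewrite /bracket_factor raddf_sum (bigD1 k) //= mcoeffZ mcoeffX eqxx mulr1.
rewrite big1 ?addr0 => [|j jk]; last first.
  rewrite mcoeffZ mcoeffX.
  have [->|/eqP tj] := eqVneq (t j) 0%N; first by rewrite !mul0r.
  case: eqP => [/(congr1 (fun m : 'X_{1..n + n} => m (cre j)))|]; last by rewrite mulr0.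
  have kj : (k == j) = false by rewrite eq_sym (negbTE jk).
  by rewrite !mnmBE !mnm1E !eq_shift eqxx kj mkgamma_cre; lia.
by rewrite mulf_eq0 pnatr_eq0 subr_eq0 eqr_nat negb_or tk abk.
Qed.

(* Top-degree part of [z^(l)] when [z^(0) = c2 a^(a,b) + c1 a^(b,a)]. *)
Definition chain_lead a b (c1 c2 : algC) l : W :=
  ((2%:R * 'i) ^+ l) *: (bracket_factor a b ^+ l *
    (c2 *: 'X_[mkgamma a b] + ((-1) ^+ l * c1) *: 'X_[mkgamma b a])).

Lemma pbracket_chain_lead a b c1 c2 l :
  pbracket ('i *: ('X_[F] + 'X_[F])) (chain_lead a b c1 c2 l) = chain_lead a b c1 c2 l.+1.
Proof.
rewrite pbracketZl pbracketDl /chain_lead pbracketZ pbracketM pbracket_bracket_factorX.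
rewrite pbracketD !pbracketZ !pbracketX_mkgamma bracket_factorC.
rewrite -!mul_mpolyC !rmorphM !rmorphXn /= !exprS.
ring.
Qed.

Lemma dhomog_chain_lead a b c1 c2 l :
  chain_lead a b c1 c2 l \is (l * (mdeg F - 2) + (mdeg a + mdeg b)).-homog.
Proof.
apply/rpredZ/dhomogM; first by rewrite mulnC; apply/dhomogMn/dhomog_bracket_factor.
by apply/rpredD; apply/rpredZ; rewrite dhomogX /= mdeg_mkgamma // addnC.
Qed.

Lemma chain_lead_neq0 a b c1 c2 l : bracket_factor a b != 0 -> c2 != 0 ->
  mkgamma a b != mkgamma b a -> chain_lead a b c1 c2 l != 0.
Proof.
move=> hf c20 ab; rewrite /chain_lead -mul_mpolyC mulf_neq0 //.
  by rewrite mpolyC_eq0 expf_neq0 // mulf_neq0 ?pnatr_eq0 ?neq0Ci.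
rewrite mulf_neq0 ?expf_neq0 //.
apply/negP => /eqP /(congr1 (mcoeff (mkgamma a b))).
rewrite mcoeff0 mcoeffD !mcoeffZ !mcoeffX eqxx eq_sym (negbTE ab) mulr0 addr0 mulr1.
exact/eqP.
Qed.

End BalancedBracket.

Section Chain.
Variables (n : nat) (t a b : 'X_{1..n}).
Local Notation D := (mdeg (mkgamma t t)).

Lemma gsig_chain_lead0 s :
  exists c1 c2 : algC, c2 != 0 /\ gsig s a b = chain_lead t a b c1 c2 0.
Proof.
case: s; [exists 'i, 'i | exists 1, (-1)];
  rewrite /chain_lead /= !expr0 scale1r !mul1r dagger_amono /amono.
  by rewrite neq0Ci scalerDr addrC.
by rewrite oppr_eq0 oner_eq0 scaleN1r scale1r addrC.
Qed.

Lemma zchain_lead s c1 c2 : gsig s a b = chain_lead t a b c1 c2 0 -> (2 <= D)%N ->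
  forall l, exists2 L, zchain s a b t l = chain_lead t a b c1 c2 l + L &
    deg_add_le L 1 (l * (D - 2) + (mdeg a + mdeg b)).
Proof.
move=> chain0 D_ge2; pose f := gsig SPlus t t.
have fE : f = 'i *: ('X_[mkgamma t t] + 'X_[mkgamma t t]) by rewrite /f /= dagger_amono.
have f_deg : deg_add_le f 0 D by rewrite fE; apply/deg_add_leZ/deg_add_leD; apply: deg_add_leX.
elim=> [|l [L zl hL]]; first by exists 0; [rewrite addr0; exact: chain0 | exact: deg_add_le0].
set z := zchain s a b t l.
have z_deg : deg_add_le z 0 (l * (D - 2) + (mdeg a + mdeg b)).
  rewrite /z zl; apply: deg_add_leD; first exact/dhomog_deg_add_le/dhomog_chain_lead.
  by apply: (deg_add_le_weaken hL); lia.
have fz : pbracket f z = chain_lead t a b c1 c2 l.+1 + pbracket f L.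
  by rewrite /z zl pbracketD fE pbracket_chain_lead.
exists (pbracket f L + (wcomm f z - pbracket f z)); first by rewrite /= -/f -/z fz; ring.
apply: deg_add_leD.
  by apply: (deg_add_le_weaken (deg_add_le_pbracket f_deg hL)); lia.
by apply: (deg_add_le_weaken (wcomm_approx f_deg z_deg)); lia.
Qed.

End Chain.

Theorem theorem6 (n : nat) (hn : (0 < n)%N) (a b at_ : 'X_{1..n}) (s : sign)
  (hab : lex_le b a)
  (hminus : s = SMinus -> lex_lt b a)
  (hk : exists k : 'I_n, a k <> b k /\ at_ k <> 0%N) :
  forall l : nat,
    zchain s a b at_ l != 0 /\
    wdeg (zchain s a b at_ l) = (2 * l * (mdeg at_ - 1) + mdeg a + mdeg b)%N.
Proof.
have [k [abk tk]] := hk.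
have D_ge2 : (2 <= mdeg (mkgamma at_ at_))%N.
  by rewrite mdeg_mkgamma mdegE (bigD1 k) //=; lia.
have [c1 [c2 [c20 chain0]]] := gsig_chain_lead0 at_ a b s.
have ab : mkgamma a b != mkgamma b a.
  by apply/eqP => /(congr1 (fun m : 'X_{1..n + n} => m (lshift n k))); rewrite /= !mkgamma_cre.
move=> l; have [L -> hL] := zchain_lead chain0 D_ge2 l.
have lead_neq0 := chain_lead_neq0 c1 l (bracket_factor_neq0 tk abk) c20 ab.
have msize_z := msize_dhomogD lead_neq0 (dhomog_chain_lead _ _ _ _ _ _) hL.
split; first by apply/eqP => z_eq0; move: msize_z; rewrite z_eq0 msize0.
by rewrite /wdeg msize_z mdeg_mkgamma; nia.
Qed.
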